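(* Let $(X,d,f)$ be a dynamical system and $\mathcal{A}=\{\mathcal{U}_n\}_{n\in\mathbb{N}}$ a tame defining sequence of $(X,d)$. Then $f$ has the finite shadowing property if and only if for every $m\in\mathbb{N}$ there is $n>m$ such that $\mathcal{PO}(\mathcal{U}_n)\hookrightarrow\mathcal{O}(\mathcal{U}_m)$, i.e. for every $(O_i)\in\mathcal{PO}(\mathcal{U}_n)$ the unique $(V_i)\in\mathcal{U}_m^{\mathbb{N}}$ with $O_i\subseteq V_i$ for all $i$ belongs to $\mathcal{O}(\mathcal{U}_m)$.
   Context: Spaces are nonempty separable metrizable; $d$ is admissible and $f$ continuous. A partition is a cover by pairwise disjoint nonempty clopen sets. A defining sequence is a sequence $\{\mathcal{U}_n\}$ of partitions, each refining the previous, whose union is a basis; tame if $\sup\{\operatorname{diam}O:O\in\mathcal{U}_n\}\to0$ and for each $n$ there is $\rho_n>0$ such that points in distinct elements of $\mathcal{U}_n$ have distance $\ge\rho_n$. $\mathcal{O}(\mathcal{U})=\{(O_i)\in\mathcal{U}^{\mathbb{N}}:\forall k\ \exists x,\ f^i(x)\in O_i\ (0\le i\le k)\}$; $\mathcal{PO}(\mathcal{U})=\{(O_i)\in\mathcal{U}^{\mathbb{N}}: f(O_i)\cap O_{i+1}\ne\emptyset\ \forall i\}$. Finite shadowing property: for every $\varepsilon>0$ there is $\delta>0$ such that every finite sequence $(x_i)_{i=0}^k$ with $d(f(x_i),x_{i+1})<\delta$ admits $z$ with $d(f^i(z),x_i)<\varepsilon$ for $0\le i\le k$. *)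

From Stdlib Require Import Reals.
Open Scope R_scope.

Definition subset_ {X : Type} (A B : X -> Prop) : Prop := forall x, A x -> B x.

Definition is_metric {X : Type} (d : X -> X -> R) : Prop :=
  (forall x y, 0 <= d x y) /\
  (forall x y, d x y = 0 <-> x = y) /\
  (forall x y, d x y = d y x) /\
  (forall x y z, d x z <= d x y + d y z).

(* open sets of the topology induced by d (d is admissible: the topology of X
   is, by definition, the one induced by d) *)
Definition d_open {X : Type} (d : X -> X -> R) (U : X -> Prop) : Prop :=
  forall x, U x -> exists e, 0 < e /\ forall y, d x y < e -> U y.

Definition d_clopen {X : Type} (d : X -> X -> R) (U : X -> Prop) : Prop :=
  d_open d U /\ d_open d (fun x => ~ U x).

Definition d_separable {X : Type} (d : X -> X -> R) : Prop :=
  exists s : nat -> X, forall x e, 0 < e -> exists n, d x (s n) < e.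

Definition d_continuous {X : Type} (d : X -> X -> R) (f : X -> X) : Prop :=
  forall x e, 0 < e -> exists dl, 0 < dl /\ forall y, d x y < dl -> d (f x) (f y) < e.

(* A partition: cover by pairwise disjoint nonempty clopen sets.
   A family of subsets is a predicate P on subsets. *)
Definition is_partition {X : Type} (d : X -> X -> R) (P : (X -> Prop) -> Prop) : Prop :=
  (forall O, P O -> (exists x, O x) /\ d_clopen d O) /\
  (forall O1 O2, P O1 -> P O2 -> O1 <> O2 -> forall x, O1 x -> O2 x -> False) /\
  (forall x, exists O, P O /\ O x).

Definition refines {X : Type} (V U : (X -> Prop) -> Prop) : Prop :=
  forall O, V O -> exists O', U O' /\ subset_ O O'.

Definition defining_sequence {X : Type} (d : X -> X -> R)
    (U : nat -> (X -> Prop) -> Prop) : Prop :=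
  (forall n, is_partition d (U n)) /\
  (forall n, refines (U (S n)) (U n)) /\
  (forall W x, d_open d W -> W x ->
     exists n O, U n O /\ O x /\ subset_ O W).

Definition tame {X : Type} (d : X -> X -> R) (U : nat -> (X -> Prop) -> Prop) : Prop :=
  defining_sequence d U /\
  (forall eps, 0 < eps -> exists N, forall n, (N <= n)%nat ->
     forall O, U n O -> forall x y, O x -> O y -> d x y <= eps) /\
  (forall n, exists rho, 0 < rho /\
     forall O1 O2, U n O1 -> U n O2 -> O1 <> O2 ->
       forall x y, O1 x -> O2 y -> rho <= d x y).

Definition orbit_seqs {X : Type} (f : X -> X) (P : (X -> Prop) -> Prop)
    (O : nat -> (X -> Prop)) : Prop :=
  (forall i, P (O i)) /\
  (forall k, exists x, forall i, (i <= k)%nat -> O i (Nat.iter i f x)).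

Definition pseudo_orbit_seqs {X : Type} (f : X -> X) (P : (X -> Prop) -> Prop)
    (O : nat -> (X -> Prop)) : Prop :=
  (forall i, P (O i)) /\
  (forall i, exists x, O i x /\ O (S i) (f x)).

Definition PO_embeds_O {X : Type} (f : X -> X) (Un Um : (X -> Prop) -> Prop) : Prop :=
  forall O : nat -> (X -> Prop), pseudo_orbit_seqs f Un O ->
  forall V : nat -> (X -> Prop),
    (forall i, Um (V i) /\ subset_ (O i) (V i)) ->
    orbit_seqs f Um V.

Definition finite_shadowing {X : Type} (d : X -> X -> R) (f : X -> X) : Prop :=
  forall eps, 0 < eps -> exists dl, 0 < dl /\
    forall (k : nat) (x : nat -> X),
      (forall i, (i < k)%nat -> d (f (x i)) (x (S i)) < dl) ->
      exists z, forall i, (i <= k)%nat -> d (Nat.iter i f z) (x i) < eps.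

(* By separation, two points of a tame [U_n] closer than [rho_n] lie in one
   block of [U_n]; by the vanishing diameters, two points in one block of a fine
   [U_n] are arbitrarily close.  So points chosen along a pseudo-orbit of blocks
   of a fine [U_n] form a delta-chain, and a point shadowing it within [rho_m]
   visits the coarser blocks of [U_m]; conversely the blocks of [U_n] along a
   [rho_n]-chain form a pseudo-orbit, and an orbit through the coarser blocks of
   a fine [U_m] stays within their diameter of the chain. *)
From Stdlib Require Import Reals Lra Lia Classical ClassicalEpsilon.
Open Scope R_scope.

Section Partitions.

Context {X : Type} (d : X -> X -> R).

Definition separated_by (P : (X -> Prop) -> Prop) (rho : R) : Prop :=
  forall O1 O2, P O1 -> P O2 -> O1 <> O2 ->
    forall x y, O1 x -> O2 y -> rho <= d x y.

Definition diam_le (P : (X -> Prop) -> Prop) (eps : R) : Prop :=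
  forall O, P O -> forall x y, O x -> O y -> d x y <= eps.

Lemma separated_close_in_block (P : (X -> Prop) -> Prop) (rho : R) V x y :
  (forall z, exists O, P O /\ O z) -> separated_by P rho ->
  P V -> V y -> d x y < rho -> V x.
Proof.
  intros Hcov Hsep HV Vy Hxy.
  destruct (Hcov x) as [W [HW Wx]].
  destruct (classic (W = V)) as [<- | HWV]; [exact Wx |].
  specialize (Hsep W V HW HV HWV x y Wx Vy). lra.
Qed.

Lemma refines_le (U : nat -> (X -> Prop) -> Prop) m n :
  (forall k, refines (U (S k)) (U k)) -> (m <= n)%nat -> refines (U n) (U m).
Proof.
  intros Href Hmn. induction Hmn as [| n _ IH].
  - intros O HO. exists O. split; [exact HO | intros x Ox; exact Ox].
  - intros O HO. destruct (Href n O HO) as [O1 [HO1 S1]].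
    destruct (IH O1 HO1) as [O2 [HO2 S2]].
    exists O2. split; [exact HO2 | intros x Ox; apply S2, S1, Ox].
Qed.

Lemma pseudo_orbit_points (f : X -> X) (P : (X -> Prop) -> Prop) O eps :
  diam_le P eps -> pseudo_orbit_seqs f P O ->
  exists y : nat -> X, forall i, O i (y i) /\ d (f (y i)) (y (S i)) <= eps.
Proof.
  intros Hdiam [HPO Hstep].
  destruct (choice _ Hstep) as [y Hy].
  exists y. intro i. split; [apply Hy |].
  apply (Hdiam (O (S i)) (HPO (S i))); [apply Hy | apply (Hy (S i))].
Qed.

Lemma chain_blocks_pseudo_orbit (f : X -> X) (P : (X -> Prop) -> Prop) rho
    (x : nat -> X) :
  (forall z, exists O, P O /\ O z) -> separated_by P rho ->
  (forall i, d (f (x i)) (x (S i)) < rho) ->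
  exists O, pseudo_orbit_seqs f P O /\ forall i, O i (x i).
Proof.
  intros Hcov Hsep Hchain.
  destruct (choice _ Hcov) as [block Hblock].
  exists (fun i => block (x i)). split; [split |].
  - intro i. apply Hblock.
  - intro i. exists (x i). split; [apply Hblock |].
    apply (separated_close_in_block P rho _ _ (x (S i)) Hcov Hsep);
      [apply Hblock .. | apply Hchain].
  - intro i. apply Hblock.
Qed.

(* Past [k] the chain follows the orbit of [x k], whose steps have length 0. *)
Lemma extend_chain (f : X -> X) (k : nat) (x : nat -> X) rho :
  (forall z, d z z = 0) -> 0 < rho ->
  (forall i, (i < k)%nat -> d (f (x i)) (x (S i)) < rho) ->
  exists x' : nat -> X, (forall i, (i <= k)%nat -> x' i = x i) /\
    forall i, d (f (x' i)) (x' (S i)) < rho.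
Proof.
  intros Hdzz Hrho Hchain.
  exists (fun i => if Nat.leb i k then x i else Nat.iter (i - k) f (x k)).
  split.
  - intros i Hi. now rewrite (proj2 (Nat.leb_le i k) Hi).
  - intro i. destruct (Nat.leb_spec i k), (Nat.leb_spec (S i) k); try lia.
    + now apply Hchain.
    + replace i with k by lia. rewrite Nat.sub_succ_l, Nat.sub_diag by lia.
      simpl. now rewrite Hdzz.
    + rewrite Nat.sub_succ_l by lia. simpl. now rewrite Hdzz.
Qed.

End Partitions.

Lemma shadowing_PO_embeds_O {X : Type} (d : X -> X -> R) (f : X -> X)
    (Un Um : (X -> Prop) -> Prop) rho dl :
  (forall z, exists O, Um O /\ O z) -> separated_by d Um rho ->
  diam_le d Un (dl / 2) -> 0 < dl ->
  (forall (k : nat) (x : nat -> X),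
      (forall i, (i < k)%nat -> d (f (x i)) (x (S i)) < dl) ->
      exists z, forall i, (i <= k)%nat -> d (Nat.iter i f z) (x i) < rho) ->
  PO_embeds_O f Un Um.
Proof.
  intros Hcov Hsep Hdiam Hdl Hshadow O HPO V HV.
  split; [intro i; apply HV |]. intro k.
  destruct (pseudo_orbit_points d f Un O (dl / 2) Hdiam HPO) as [y Hy].
  destruct (Hshadow k y) as [z Hz].
  { intros i _. specialize (Hy i). lra. }
  exists z. intros i Hi.
  apply (separated_close_in_block d Um rho _ _ (y i) Hcov Hsep);
    [apply HV | apply (proj2 (HV i)), Hy | now apply Hz].
Qed.

Lemma PO_embeds_O_shadowing {X : Type} (d : X -> X -> R) (f : X -> X)
    (Un Um : (X -> Prop) -> Prop) rho eps :
  (forall z, d z z = 0) -> (forall z, exists O, Un O /\ O z) ->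
  separated_by d Un rho -> 0 < rho -> refines Un Um ->
  diam_le d Um (eps / 2) -> 0 < eps -> PO_embeds_O f Un Um ->
  forall (k : nat) (x : nat -> X),
    (forall i, (i < k)%nat -> d (f (x i)) (x (S i)) < rho) ->
    exists z, forall i, (i <= k)%nat -> d (Nat.iter i f z) (x i) < eps.
Proof.
  intros Hdzz Hcov Hsep Hrho Href Hdiam Heps Hemb k x Hchain.
  destruct (extend_chain d f k x rho Hdzz Hrho Hchain) as [x' [Hx'x Hx']].
  destruct (chain_blocks_pseudo_orbit d f Un rho x' Hcov Hsep Hx')
    as [O [HPO HOx']].
  destruct (choice _ (fun i => Href (O i) (proj1 HPO i))) as [V HV].
  destruct (Hemb O HPO V HV) as [_ Horbit].
  destruct (Horbit k) as [z Hz].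
  exists z. intros i Hi.
  assert (Vx : V i (x i)) by (rewrite <- (Hx'x i Hi); apply HV, HOx').
  specialize (Hdiam (V i) (proj1 (HV i)) _ _ (Hz i Hi) Vx). lra.
Qed.

Theorem proposition4p14 (X : Type) (d : X -> X -> R) (f : X -> X)
  (U : nat -> (X -> Prop) -> Prop) :
  inhabited X -> is_metric d -> d_separable d -> d_continuous d f ->
  tame d U ->
  (finite_shadowing d f <->
   forall m : nat, exists n : nat, (m < n)%nat /\ PO_embeds_O f (U n) (U m)).
Proof.
  intros _ [_ [Hdeq _]] _ _ [[Hpart [Href _]] [Hdiam Hsep]].
  assert (Hdzz : forall z, d z z = 0) by (intro z; now apply Hdeq).
  assert (Hcov : forall n z, exists O, U n O /\ O z)
    by (intro n; apply (Hpart n)).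
  split.
  - intros Hshadow m.
    destruct (Hsep m) as [rho [Hrho Hsepm]].
    destruct (Hshadow rho Hrho) as [dl [Hdl Hsh]].
    destruct (Hdiam (dl / 2)) as [N HN]; [lra |].
    exists (S (m + N)). split; [lia |].
    exact (shadowing_PO_embeds_O d f _ _ rho dl (Hcov m) Hsepm
             (HN (S (m + N)) ltac:(lia)) Hdl Hsh).
  - intros Hemb eps Heps.
    destruct (Hdiam (eps / 2)) as [N HN]; [lra |].
    destruct (Hemb N) as [n [HNn Hembn]].
    destruct (Hsep n) as [rho [Hrho Hsepn]].
    exists rho. split; [exact Hrho |].
    exact (PO_embeds_O_shadowing d f (U n) (U N) rho eps Hdzz (Hcov n) Hsepn Hrho
             (refines_le U N n Href (Nat.lt_le_incl _ _ HNn)) (HN N (le_n N)) Heps Hembn).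
Qed.
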